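(* Let $\mathbf{a}=(a_1,a_2,a_3,a_4)\in\mathbb{N}^4$ with $a_1\le a_2\le a_3\le a_4$, let $A=a_1+a_2+a_3+a_4$, let $m\ge3$ be an integer, $a\in\mathbb{N}$, $b\in\mathbb{Z}$, and $N=\frac{m-2}{2}(a-b)+b$. Suppose the system $$a=a_1x_1^2+a_2x_2^2+a_3x_3^2+a_4x_4^2,\qquad b=a_1x_1+a_2x_2+a_3x_3+a_4x_4$$ has an integer solution $(x_1,x_2,x_3,x_4)\in\mathbb{Z}^4$. Then: (i) $a\equiv b\pmod 2$, $Aa-b^2\ge0$, and $N=P_{m,\mathbf{a}}(x_1,x_2,x_3,x_4)$; (ii) if $b\ge\sqrt{a_2+a_3+a_4}\cdot\sqrt a$, then $N$ is represented by $P_{m,\mathbf{a}}$ over $\mathbb{N}_0$.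
   Context: $P_m(x)=\frac{m-2}{2}(x^2-x)+x$ for integers $x$, and $P_{m,\mathbf{a}}(\mathbf{x})=\sum_{i=1}^4a_iP_m(x_i)$. $N$ is represented by $P_{m,\mathbf{a}}$ over $\mathbb{N}_0$ if $N=P_{m,\mathbf{a}}(\mathbf{x})$ for some $\mathbf{x}\in\mathbb{N}_0^4$, where $\mathbb{N}_0=\{0,1,2,\dots\}$. *)

From Stdlib Require Import ZArith Reals.
Open Scope R_scope.

Definition Pm (m : Z) (x : R) : R :=
  (IZR m - 2) / 2 * (x ^ 2 - x) + x.

Definition Pma (m a1 a2 a3 a4 : Z) (x1 x2 x3 x4 : R) : R :=
  IZR a1 * Pm m x1 + IZR a2 * Pm m x2 + IZR a3 * Pm m x3 + IZR a4 * Pm m x4.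

Definition represented_N0 (m a1 a2 a3 a4 : Z) (N : R) : Prop :=
  exists y1 y2 y3 y4 : nat,
    N = Pma m a1 a2 a3 a4 (INR y1) (INR y2) (INR y3) (INR y4).

From Stdlib Require Import ZArith Reals Lia Lra.

(* Part (i) is bookkeeping: x^2 = x (mod 2) gives the parity, and Lagrange's
   identity gives Cauchy-Schwarz, A a >= b^2.  For (ii), the hypothesis says
   b >= 0 and b^2 >= (a2 + a3 + a4) a.  If some x_i were negative, dropping
   the i-th term would strictly increase b, and Cauchy-Schwarz for the three
   remaining terms (whose weights sum to at most a2 + a3 + a4) would give
   b^2 < (a2 + a3 + a4) a.  So every x_i is a natural number. *)

Lemma sqr_eq_self_plus_even (x : Z) : exists k, (x ^ 2 = x + 2 * k)%Z.
Proof.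
  destruct (Z.Even_or_Odd x) as [[q ->] | [q ->]].
  - exists (q * (2 * q - 1))%Z; ring.
  - exists (q * (2 * q + 1))%Z; ring.
Qed.

Lemma weighted_sum_sqr_mod2 (a1 a2 a3 a4 x1 x2 x3 x4 : Z) :
  ((a1 * x1 ^ 2 + a2 * x2 ^ 2 + a3 * x3 ^ 2 + a4 * x4 ^ 2) mod 2
   = (a1 * x1 + a2 * x2 + a3 * x3 + a4 * x4) mod 2)%Z.
Proof.
  destruct (sqr_eq_self_plus_even x1) as [k1 ->], (sqr_eq_self_plus_even x2) as [k2 ->],
    (sqr_eq_self_plus_even x3) as [k3 ->], (sqr_eq_self_plus_even x4) as [k4 ->].
  match goal with |- (?l mod 2 = ?r mod 2)%Z =>
    replace l with (r + (a1 * k1 + a2 * k2 + a3 * k3 + a4 * k4) * 2)%Z by ring end.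
  apply Z_mod_plus_full.
Qed.

Lemma weighted_sqr_nonneg (p d : Z) : (0 <= p -> 0 <= p * d ^ 2)%Z.
Proof.
  intro Hp; apply Z.mul_nonneg_nonneg; [exact Hp | apply Z.pow_even_nonneg].
  now exists 1%Z.
Qed.

Lemma lagrange_identity4 (a1 a2 a3 a4 x1 x2 x3 x4 : Z) :
  ((a1 + a2 + a3 + a4) * (a1 * x1 ^ 2 + a2 * x2 ^ 2 + a3 * x3 ^ 2 + a4 * x4 ^ 2)
   - (a1 * x1 + a2 * x2 + a3 * x3 + a4 * x4) ^ 2
   = a1 * a2 * (x1 - x2) ^ 2 + a1 * a3 * (x1 - x3) ^ 2 + a1 * a4 * (x1 - x4) ^ 2
   + a2 * a3 * (x2 - x3) ^ 2 + a2 * a4 * (x2 - x4) ^ 2 + a3 * a4 * (x3 - x4) ^ 2)%Z.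
Proof. ring. Qed.

Lemma weighted_cauchy_schwarz4 (a1 a2 a3 a4 x1 x2 x3 x4 : Z) :
  (0 <= a1 -> 0 <= a2 -> 0 <= a3 -> 0 <= a4 ->
   (a1 * x1 + a2 * x2 + a3 * x3 + a4 * x4) ^ 2
   <= (a1 + a2 + a3 + a4) * (a1 * x1 ^ 2 + a2 * x2 ^ 2 + a3 * x3 ^ 2 + a4 * x4 ^ 2))%Z.
Proof.
  intros H1 H2 H3 H4.
  apply Z.le_0_sub; rewrite lagrange_identity4.
  repeat apply Z.add_nonneg_nonneg; apply weighted_sqr_nonneg, Z.mul_nonneg_nonneg; assumption.
Qed.

Lemma weighted_coord_nonneg (c p q r x y z w S : Z) :
  (1 <= c -> 0 <= p -> 0 <= q -> 0 <= r -> p + q + r <= S ->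
   0 <= c * x + p * y + q * z + r * w ->
   S * (c * x ^ 2 + p * y ^ 2 + q * z ^ 2 + r * w ^ 2) <= (c * x + p * y + q * z + r * w) ^ 2 ->
   0 <= x)%Z.
Proof.
  intros Hc Hp Hq Hr HS.
  assert (HS0 : (0 <= S)%Z) by lia.
  intros Hb Hlarge.
  apply Z.nlt_ge; intro Hx.
  set (T := (p * y + q * z + r * w)%Z).
  set (Q := (p * y ^ 2 + q * z ^ 2 + r * w ^ 2)%Z).
  replace (c * x + p * y + q * z + r * w)%Z with (c * x + T)%Z
    in Hb, Hlarge by (unfold T; ring).
  replace (c * x ^ 2 + p * y ^ 2 + q * z ^ 2 + r * w ^ 2)%Z with (c * x ^ 2 + Q)%Z
    in Hlarge by (unfold Q; ring).
  assert (HCS : (T ^ 2 <= (p + q + r) * Q)%Z).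
  { pose proof (weighted_cauchy_schwarz4 0 p q r x y z w) as CS.
    rewrite !Z.mul_0_l, !Z.add_0_l in CS; auto with zarith. }
  assert (Hb_sq : ((c * x + T) ^ 2 < T ^ 2)%Z).
  { apply Z.pow_lt_mono_l; [lia | split; [exact Hb |]].
    pose proof (Z.mul_pos_neg c x ltac:(lia) Hx); lia. }
  assert (HQ : (0 <= Q)%Z).
  { unfold Q; repeat apply Z.add_nonneg_nonneg; apply weighted_sqr_nonneg; assumption. }
  assert (HSQ : ((p + q + r) * Q <= S * (c * x ^ 2 + Q))%Z).
  { apply Z.le_trans with (S * Q)%Z.
    - now apply Z.mul_le_mono_nonneg_r.
    - apply Z.mul_le_mono_nonneg_l; [exact HS0 |].
      pose proof (weighted_sqr_nonneg c x ltac:(lia)); lia. }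
  apply (Z.lt_irrefl ((c * x + T) ^ 2)).
  apply (Z.lt_le_trans _ _ _ Hb_sq), (Z.le_trans _ _ _ HCS), (Z.le_trans _ _ _ HSQ), Hlarge.
Qed.

Lemma sqrt_mul_le_IZR (s a b : Z) :
  (0 <= s)%Z -> (0 <= a)%Z -> sqrt (IZR s) * sqrt (IZR a) <= IZR b ->
  (0 <= b /\ s * a <= b ^ 2)%Z.
Proof.
  intros Hs Ha Hle.
  rewrite <- sqrt_mult in Hle by (apply IZR_le; assumption).
  rewrite <- mult_IZR in Hle.
  pose proof (sqrt_pos (IZR (s * a))) as Hpos.
  split.
  - apply le_IZR; lra.
  - apply le_IZR.
    rewrite <- (sqrt_sqrt (IZR (s * a))) by (apply IZR_le, Z.mul_nonneg_nonneg; assumption).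
    rewrite Z.pow_2_r, (mult_IZR b b).
    apply Rmult_le_compat; lra.
Qed.

Lemma Pma_IZR (m a1 a2 a3 a4 x1 x2 x3 x4 : Z) :
  Pma m a1 a2 a3 a4 (IZR x1) (IZR x2) (IZR x3) (IZR x4)
  = (IZR m - 2) / 2
      * (IZR (a1 * x1 ^ 2 + a2 * x2 ^ 2 + a3 * x3 ^ 2 + a4 * x4 ^ 2)
         - IZR (a1 * x1 + a2 * x2 + a3 * x3 + a4 * x4))
    + IZR (a1 * x1 + a2 * x2 + a3 * x3 + a4 * x4).
Proof.
  unfold Pma, Pm; rewrite !Z.pow_2_r, !plus_IZR, !mult_IZR; field.
Qed.

Lemma represented_N0_Pma_IZR (m a1 a2 a3 a4 x1 x2 x3 x4 : Z) :
  (0 <= x1)%Z -> (0 <= x2)%Z -> (0 <= x3)%Z -> (0 <= x4)%Z ->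
  represented_N0 m a1 a2 a3 a4 (Pma m a1 a2 a3 a4 (IZR x1) (IZR x2) (IZR x3) (IZR x4)).
Proof.
  intros H1 H2 H3 H4.
  exists (Z.to_nat x1), (Z.to_nat x2), (Z.to_nat x3), (Z.to_nat x4).
  now rewrite !INR_IZR_INZ, !Z2Nat.id.
Qed.

Theorem lemma3p1 (a1 a2 a3 a4 m a b x1 x2 x3 x4 : Z) :
  (1 <= a1)%Z -> (a1 <= a2)%Z -> (a2 <= a3)%Z -> (a3 <= a4)%Z ->
  (3 <= m)%Z -> (1 <= a)%Z ->
  a = (a1 * x1 ^ 2 + a2 * x2 ^ 2 + a3 * x3 ^ 2 + a4 * x4 ^ 2)%Z ->
  b = (a1 * x1 + a2 * x2 + a3 * x3 + a4 * x4)%Z ->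
  let A := (a1 + a2 + a3 + a4)%Z in
  let N : R := ((IZR m - 2) / 2 * (IZR a - IZR b) + IZR b)%R in
  ( (a mod 2 = b mod 2)%Z
    /\ (0 <= A * a - b ^ 2)%Z
    /\ N = Pma m a1 a2 a3 a4 (IZR x1) (IZR x2) (IZR x3) (IZR x4) )
  /\ ((IZR b >= sqrt (IZR (a2 + a3 + a4)) * sqrt (IZR a))%R ->
      represented_N0 m a1 a2 a3 a4 N).
Proof.
  intros H1 H2 H3 H4 _ Ha Hadef Hbdef A N.
  assert (HN : N = Pma m a1 a2 a3 a4 (IZR x1) (IZR x2) (IZR x3) (IZR x4)).
  { unfold N; rewrite Pma_IZR, Hadef, Hbdef; reflexivity. }
  split; [split; [| split] |].
  - subst a b; apply weighted_sum_sqr_mod2.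
  - apply Z.le_0_sub; unfold A; subst a b.
    apply weighted_cauchy_schwarz4; lia.
  - exact HN.
  - intro Hsqrt.
    destruct (sqrt_mul_le_IZR (a2 + a3 + a4) a b) as [Hb Hlarge]; [lia | lia | lra |].
    rewrite HN; subst a b.
    apply represented_N0_Pma_IZR.
    + apply (weighted_coord_nonneg a1 a2 a3 a4 x1 x2 x3 x4 (a2 + a3 + a4)); lia.
    + apply (weighted_coord_nonneg a2 a1 a3 a4 x2 x1 x3 x4 (a2 + a3 + a4)); lia.
    + apply (weighted_coord_nonneg a3 a1 a2 a4 x3 x1 x2 x4 (a2 + a3 + a4)); lia.
    + apply (weighted_coord_nonneg a4 a1 a2 a3 x4 x1 x2 x3 (a2 + a3 + a4)); lia.
Qed.
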